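(* Let $X$, $M$ be sets with functions $\mathsf{upd}_X : X \to X$ and $\mathsf{upd}_M : M \to M$, and let $\mu : X \to M$ be a surjective function with $\mu \circ \mathsf{upd}_X = \mathsf{upd}_M \circ \mu$. Define the deterministic map $c : X \times M \to M$, $c(y,m) = \mathsf{upd}_M(m)$; the interpretation map $\psi = \mu^{-1} : M \to \mathcal{P}^+(X)$, $\mu^{-1}(m) = \{x \mid \mu(x) = m\}$; and the possibilistic hidden Markov model $\kappa : X \to \mathcal{P}^+(X \times X)$, $\kappa(x) = \{(x', x) \mid x' \in X,\ \mu(x') = \mu(\mathsf{upd}_X(x))\}$ (first component the updated hidden state, second component the observation). Then $(\psi, \kappa)$ is a Bayesian filtering interpretation of $c$ in $\mathbf{Rel}^+$, i.e. the consistency equation holds: for every $m \in M$, $$\{(x',y) \mid \exists x \in \psi(m),\ (x',y) \in \kappa(x)\} = \{(x',y) \mid y \in Y_m,\ x' \in \psi(c(y,m))\},$$ where $Y_m = \{y \mid \exists x \in \psi(m),\ \exists x',\ (x',y) \in \kappa(x)\}$.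
   Context: $\mathcal{P}^+(Y)$ denotes the non-empty subsets of $Y$; $\mathbf{Rel}^+$ is the Markov category of sets and left-total relations $X \to \mathcal{P}^+(Y)$ with relational composition, cartesian product as tensor, copy $x \mapsto \{(x,x)\}$ and delete. Given a deterministic map $c : Y \times \Theta \to \Theta$, a Bayesian filtering interpretation of $c$ is a pair of a morphism $\psi: \Theta \to \mathcal{P}^+(X)$ (interpretation map) and $\kappa : X \to \mathcal{P}^+(X \times Y)$ (hidden Markov model) such that the joint ''distribution'' over (next hidden state, observation) obtained by sampling $x \in \psi(\theta)$ and then $\kappa(x)$ equals the one obtained by sampling the observation $y$ from its marginal and then the next hidden state from $\psi(c(y,\theta))$; in $\mathbf{Rel}^+$ this is the displayed set equality. *)

(* subsets as predicates  T -> Prop.  Morphisms of Rel+ are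
   relations X -> P^+(Y), i.e. maps into predicates that are nonempty. *)
From Stdlib Require Import Classical FunctionalExtensionality PropExtensionality.

Definition relp (X Y : Type) := X -> Y -> Prop.
Definition left_total {X Y : Type} (f : relp X Y) : Prop :=
  forall x, exists y, f x y.

Definition preim {X M : Type} (mu : X -> M) : relp M X :=
  fun m x => mu x = m.

Definition bayes_filter_interp {X Y Theta : Type}
  (c : Y -> Theta -> Theta) (psi : relp Theta X) (kappa : relp X (X * Y)) : Prop :=
  left_total psi /\ left_total kappa /\
  forall th : Theta,
    (fun p : X * Y => exists x, psi th x /\ kappa x p) =
    (fun p : X * Y =>
       (exists x, psi th x /\ exists x', kappa x (x', snd p)) /\
       psi (c (snd p) th) (fst p)).

(* The interpretation [mu^{-1}(m)] together with one step of [kappa] only ever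
   produces pairs [(x', y)] with [mu y = m] and [mu x' = mu (updX y) = updM m];
   conversely every such pair arises from the hidden state [x = y].  The same
   description holds for the observation marginal ([mu y = m]) followed by the
   fibre [mu^{-1}(updM m)], so the two sides of the consistency equation agree. *)
From Stdlib Require Import FunctionalExtensionality PropExtensionality.

Lemma pred_ext {T : Type} (P Q : T -> Prop) :
  (forall t, P t <-> Q t) -> P = Q.
Proof.
  intro PQ. apply functional_extensionality. intro t.
  apply propositional_extensionality. apply PQ.
Qed.

Lemma preim_left_total {X M : Type} (mu : X -> M) :
  (forall m, exists x, mu x = m) -> left_total (preim mu).
Proof. intros mu_surj m. apply mu_surj. Qed.

Section FibreFilter.

Variables (X M : Type) (updX : X -> X) (updM : M -> M) (mu : X -> M).
Hypothesis mu_comm : forall x, mu (updX x) = updM (mu x).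

Definition fibre_hmm : relp X (X * X) :=
  fun x p => mu (fst p) = mu (updX x) /\ snd p = x.

Lemma fibre_hmm_left_total : left_total fibre_hmm.
Proof. intro x. exists (updX x, x). split; reflexivity. Qed.

Lemma fibre_observation_iff (m : M) (y : X) :
  (exists x, preim mu m x /\ exists x', fibre_hmm x (x', y)) <-> mu y = m.
Proof.
  unfold preim, fibre_hmm; simpl. split.
  - intros [x [mu_x [x' [_ y_x]]]]. subst y. exact mu_x.
  - intro mu_y. exists y. split; [exact mu_y |].
    exists (updX y). split; reflexivity.
Qed.

Lemma fibre_joint_iff (m : M) (x' y : X) :
  (exists x, preim mu m x /\ fibre_hmm x (x', y)) <-> mu y = m /\ mu x' = updM m.
Proof.
  unfold preim, fibre_hmm; simpl. split.
  - intros [x [mu_x [mu_x' y_x]]]. subst y.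
    split; [exact mu_x |]. rewrite mu_x', mu_comm, mu_x. reflexivity.
  - intros [mu_y mu_x']. exists y. split; [exact mu_y |].
    split; [| reflexivity]. rewrite mu_x', mu_comm, mu_y. reflexivity.
Qed.

End FibreFilter.

Theorem theorem3 (X M : Type) (updX : X -> X) (updM : M -> M) (mu : X -> M)
  (mu_surj : forall m : M, exists x : X, mu x = m)
  (mu_comm : forall x : X, mu (updX x) = updM (mu x)) :
  bayes_filter_interp (X := X) (Y := X) (Theta := M)
    (fun (_ : X) (m : M) => updM m)
    (preim mu)
    (fun (x : X) (p : X * X) => mu (fst p) = mu (updX x) /\ snd p = x).
Proof.
  split; [exact (preim_left_total mu mu_surj) |].
  split; [exact (fibre_hmm_left_total X M updX mu) |].
  intro m. apply pred_ext. intros [x' y]; simpl.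
  rewrite (fibre_joint_iff X M updX updM mu mu_comm m x' y).
  rewrite (fibre_observation_iff X M updX mu m y).
  reflexivity.
Qed.
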